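(* If $G$ is a connected graph with diameter at most two, then $\chi_L(G)=\chi_{L_2}(G)$.
   Context: All graphs are finite and simple. A proper $k$-coloring of $G$ is a map $f$ from $V(G)$ onto $[k]=\{1,\dots,k\}$ with adjacent vertices receiving different colors; $f(S)=\{f(u):u\in S\}$ and $N_G(u)$ is the neighborhood of $u$. For a connected graph $G$ with proper $k$-coloring $f$ and color classes $V_i=f^{-1}(i)$, the color code of $v$ is $(d(v,V_1),\dots,d(v,V_k))$, where $d(v,S)=\min_{x\in S}d(v,x)$; $f$ is a locating coloring if distinct vertices have distinct color codes, and $\chi_L(G)$ is the minimum number of colors in a locating coloring. A proper $k$-coloring $f$ is a neighbor locating coloring if for any two distinct vertices $u,v$ with $f(u)=f(v)$ we have $f(N_G(u))\ne f(N_G(v))$; $\chi_{L_2}(G)$ is the minimum number of colors in a neighbor locating coloring of $G$. *)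

From mathcomp Require Import all_boot.
Set Implicit Arguments. Unset Strict Implicit. Unset Printing Implicit Defensive.

Section Graphs.
Variable T : finType.
Variable e : rel T.

Definition simple_graph : Prop := symmetric e /\ irreflexive e.

Definition connected : Prop := forall u v : T, connect e u v.

Fixpoint within (n : nat) (u v : T) : bool :=
  if n is n'.+1 then within n' u v || [exists w, e u w && within n' w v]
  else u == v.

(* graph distance: least n with a walk of length <= n (for connected graphs
   this is < #|T|; unreachable pairs get #|T|, irrelevant here) *)
Definition dist (u v : T) : nat := find (fun n => within n u v) (iota 0 #|T|).

Definition diameter_le (d : nat) : Prop := forall u v : T, dist u v <= d.

Definition neighborhood (u : T) : {set T} := [set w | e u w].

Definition proper_coloring (k : nat) (f : T -> 'I_k) : Prop :=
  (forall u v, e u v -> f u != f v) /\ (forall i : 'I_k, exists v, f v = i).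

Definition dist_class (k : nat) (f : T -> 'I_k) (v : T) (i : 'I_k) : nat :=
  \big[minn/#|T|]_(x | f x == i) dist v x.

Definition color_code (k : nat) (f : T -> 'I_k) (v : T) : {ffun 'I_k -> nat} :=
  [ffun i => dist_class f v i].

Definition locating_coloring (k : nat) (f : T -> 'I_k) : Prop :=
  proper_coloring f /\
  (forall u v : T, u != v -> color_code f u != color_code f v).

Definition neighbor_locating_coloring (k : nat) (f : T -> 'I_k) : Prop :=
  proper_coloring f /\
  (forall u v : T, u != v -> f u = f v ->
     f @: neighborhood u != f @: neighborhood v).

Definition is_chiL (k : nat) : Prop :=
  (exists f : T -> 'I_k, locating_coloring f) /\
  (forall k' (f : T -> 'I_k'), locating_coloring f -> k <= k').

Definition is_chiL2 (k : nat) : Prop :=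
  (exists f : T -> 'I_k, neighbor_locating_coloring f) /\
  (forall k' (f : T -> 'I_k'), neighbor_locating_coloring f -> k <= k').

End Graphs.

(* In a graph of diameter at most two every distance to a color class is
   0, 1 or 2: it is 0 for the vertex's own color, 1 for the colors seen in
   its neighborhood and 2 for all other (nonempty) classes.  Hence the color
   code of a vertex is determined by, and determines, its color together with
   the set of colors of its neighbors, so locating and neighbor locating
   colorings are the same colorings and the two chromatic numbers agree. *)
From mathcomp Require Import all_boot.

Set Implicit Arguments.
Unset Strict Implicit.
Unset Printing Implicit Defensive.

Section DiameterTwo.
Variable T : finType.
Variable e : rel T.
Hypothesis e_irr : irreflexive e.

Lemma card_gt1_of_neq (u v : T) : u != v -> 1 < #|T|.
Proof.
move=> uv; have := subset_leq_card (subsetT [set u; v]).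
by rewrite cards2 uv cardsT.
Qed.

Lemma dist_le_of_within n (u v : T) : n < #|T| -> within e n u v -> dist e u v <= n.
Proof.
move=> ltn w; rewrite /dist leqNgt; apply/negP => /(before_find 0).
by rewrite nth_iota // w.
Qed.

Lemma within_dist (u v : T) : dist e u v < #|T| -> within e (dist e u v) u v.
Proof.
move=> ltd; have has_within : has (fun n => within e n u v) (iota 0 #|T|).
  by rewrite has_find size_iota.
by have := nth_find 0 has_within; rewrite nth_iota.
Qed.

Lemma dist_eq0 (u v : T) : (dist e u v == 0) = (u == v).
Proof.
have T_gt0 : 0 < #|T| by apply/card_gt0P; exists u.
apply/idP/idP => [/eqP d0 | /eqP <-].
  by have := @within_dist u v; rewrite d0 => /(_ T_gt0).
by rewrite -leqn0 dist_le_of_within //=.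
Qed.

Lemma dist_eq1 (u v : T) : (dist e u v == 1) = e u v.
Proof.
apply/idP/idP => [/eqP d1 | euv].
  have uv : u != v by rewrite -dist_eq0 d1.
  have := @within_dist u v; rewrite d1 => /(_ (card_gt1_of_neq uv)).
  by rewrite /= (negPf uv) => /existsP [w /andP [uw /eqP <-]].
have uv : u != v by apply: contraTneq euv => ->; rewrite e_irr.
have d_le1 : dist e u v <= 1.
  apply: dist_le_of_within; first exact: card_gt1_of_neq uv.
  by apply/orP; right; apply/existsP; exists v; rewrite euv /=.
by rewrite eqn_leq d_le1 lt0n dist_eq0.
Qed.

Lemma dist_class_le k (f : T -> 'I_k) v x : dist_class e f v (f x) <= dist e v x.
Proof.
rewrite /dist_class; have : x \in index_enum T by rewrite mem_index_enum.
elim: (index_enum T) => [|y r IHr] //=; rewrite inE big_cons.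
case/orP=> [/eqP <- | x_r]; first by rewrite eqxx geq_minl.
by case: ifP => _; rewrite ?geq_min IHr ?orbT.
Qed.

Lemma dist_class_ge k (f : T -> 'I_k) v i n : n <= #|T| ->
  (forall x, f x = i -> n <= dist e v x) -> n <= dist_class e f v i.
Proof.
move=> n_le dist_ge; apply: (big_ind (leq n)) => // [a b na nb|x /eqP /dist_ge //].
by rewrite leq_min na nb.
Qed.

Lemma dist_class_diam2 k (f : T -> 'I_k) v i :
  proper_coloring e f -> diameter_le e 2 ->
  dist_class e f v i =
  if f v == i then 0 else if i \in f @: neighborhood e v then 1 else 2.
Proof.
move=> [_ f_onto] diam2.
have [<- | fvi] := eqVneq (f v) i.
  have /eqP dvv : dist e v v == 0 by rewrite dist_eq0.
  by apply/eqP; rewrite -leqn0 -dvv dist_class_le.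
have neq_v x : f x = i -> v != x by move=> fx; apply: contra_neq fvi => ->.
have [/imsetP [w] | i_nbr] := boolP (i \in _).
  rewrite inE => evw fwi; apply/anti_leq/andP; split.
    have /eqP <- : dist e v w == 1 by rewrite dist_eq1.
    by rewrite fwi dist_class_le.
  apply: dist_class_ge => [|x /neq_v]; first by apply/card_gt0P; exists v.
  by rewrite lt0n dist_eq0.
have [x fx] := f_onto i; apply/anti_leq/andP; split.
  by rewrite -fx (leq_trans (dist_class_le f v x) (diam2 v x)).
apply: dist_class_ge => [|y fy]; first exact: card_gt1_of_neq (neq_v x fx).
have : dist e v y != 0 by rewrite dist_eq0 neq_v.
have : dist e v y != 1.
  rewrite dist_eq1; apply: contraNN i_nbr => evy.
  by apply/imsetP; exists y; rewrite ?inE.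
by case: (dist e v y) => [|[|]].
Qed.

Lemma color_code_diam2 k (f : T -> 'I_k) u v :
  proper_coloring e f -> diameter_le e 2 ->
  (color_code e f u == color_code e f v) =
  (f u == f v) && (f @: neighborhood e u == f @: neighborhood e v).
Proof.
move=> f_proper diam2.
have own_color_notin w : f w \notin f @: neighborhood e w.
  apply/imsetP=> [[y]]; rewrite inE => ewy fwy.
  by move: (f_proper.1 _ _ ewy); rewrite fwy eqxx.
have codeE w i : color_code e f w i =
    if f w == i then 0 else if i \in f @: neighborhood e w then 1 else 2.
  by rewrite ffunE dist_class_diam2.
apply/eqP/andP => [code_uv | [/eqP fuv /eqP nbr_uv]]; last first.
  by apply/ffunP => i; rewrite !codeE fuv nbr_uv.
have code_uvE i := congr1 (fun c : {ffun _ -> nat} => c i) code_uv.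
have fuv : f u == f v.
  by have := code_uvE (f u); rewrite /= !codeE eqxx; case: (f v =P f u) => [-> // | _]; case: ifP.
split => //; apply/eqP/setP => i; have := code_uvE i; rewrite /= !codeE (eqP fuv).
have [<- | _] := eqVneq (f v) i; first by rewrite -{1}(eqP fuv) !(negPf (own_color_notin _)).
by do 2 case: ifP.
Qed.

Lemma locating_coloring_diam2 k (f : T -> 'I_k) : diameter_le e 2 ->
  locating_coloring e f <-> neighbor_locating_coloring e f.
Proof.
move=> diam2; split=> -[f_proper separates]; split=> // u v uv.
  by move=> fuv; have := separates u v uv; rewrite color_code_diam2 // fuv eqxx.
rewrite color_code_diam2 //; apply/negP => /andP [/eqP fuv /eqP nbr_uv].
by move/eqP: (separates u v uv fuv).
Qed.

End DiameterTwo.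

Theorem proposition1 (T : finType) (e : rel T) :
  simple_graph e -> 0 < #|T| -> connected e -> diameter_le e 2 ->
  forall k : nat, is_chiL e k <-> is_chiL2 e k.
Proof.
move=> [_ e_irr] _ _ diam2 k.
have sameE k' (f : T -> 'I_k') := locating_coloring_diam2 e_irr f diam2.
by split=> -[[f /sameE f_col] f_min]; split=> [|k' g /sameE /f_min //]; exists f.
Qed.
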